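(* Let $(D,\mathrm{left},\mathrm{right})$ be an interval poset with order $\sqsubseteq$, and let $\le$ be the relation on $\max(D)$ given by $a\le b$ iff $a=\mathrm{left}(z)$ and $b=\mathrm{right}(z)$ for some $z\in D$. Then for all $x,y\in D$, $$x\sqsubseteq y\iff \mathrm{left}(x)\le\mathrm{left}(y)\le\mathrm{right}(y)\le\mathrm{right}(x).$$
   Context: For a poset $(D,\sqsubseteq)$, $\max(D)$ is its set of maximal elements and $x\sqcap y$ denotes the infimum of $\{x,y\}$. An interval poset is a poset $D$ with two functions $\mathrm{left},\mathrm{right}:D\to\max(D)$ such that (only the infima named here are assumed to exist): (i) for all $x\in D$, $x=\mathrm{left}(x)\sqcap\mathrm{right}(x)$; (ii) for all $x,y\in D$, if $\mathrm{right}(x)=\mathrm{left}(y)$ then $x\sqcap y$ exists and $\mathrm{left}(x\sqcap y)=\mathrm{left}(x)$, $\mathrm{right}(x\sqcap y)=\mathrm{right}(y)$; (iii) for each $x\in D$ and each $p\in\max(D)$ with $x\sqsubseteq p$, the infima $\mathrm{left}(x)\sqcap p$ and $p\sqcap\mathrm{right}(x)$ exist and $\mathrm{left}(\mathrm{left}(x)\sqcap p)=\mathrm{left}(x)$, $\mathrm{right}(\mathrm{left}(x)\sqcap p)=p$, $\mathrm{left}(p\sqcap\mathrm{right}(x))=p$, $\mathrm{right}(p\sqcap\mathrm{right}(x))=\mathrm{right}(x)$. The relation $\le$ is a partial order on $\max(D)$. *)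

Section IntervalPosets.
Variables (D : Type) (le : D -> D -> Prop).

Definition is_partial_order : Prop :=
  (forall x, le x x) /\
  (forall x y, le x y -> le y x -> x = y) /\
  (forall x y z, le x y -> le y z -> le x z).

Definition is_maximal (p : D) : Prop := forall q, le p q -> q = p.

Definition is_inf (x y z : D) : Prop :=
  le z x /\ le z y /\ (forall w, le w x -> le w y -> le w z).

(* left, right : D -> max(D) modelled as functions D -> D landing in max(D) *)
Record IntervalPoset (left right : D -> D) : Prop := {
  ip_order : is_partial_order;
  ip_left_max : forall x, is_maximal (left x);
  ip_right_max : forall x, is_maximal (right x);
  ip_i : forall x, is_inf (left x) (right x) x;
  ip_ii : forall x y, right x = left y ->
    exists z, is_inf x y z /\ left z = left x /\ right z = right y;
  ip_iii : forall x p, is_maximal p -> le x p ->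
    (exists z, is_inf (left x) p z /\ left z = left x /\ right z = p) /\
    (exists z, is_inf p (right x) z /\ left z = p /\ right z = right x)
}.

Definition max_le (left right : D -> D) (a b : D) : Prop :=
  exists z, a = left z /\ b = right z.

End IntervalPosets.


(* Every element is the infimum of its endpoints, hence determined by them.
   If x ⊑ y then x lies below both endpoints of y, and axiom (iii) produces
   witnesses of left x ≤ left y and right y ≤ right x.  Conversely, gluing
   these witnesses to y on either side with axiom (ii) yields an element
   below y whose endpoints are those of x; that element is x itself. *)

Section IntervalPosetOrder.

Variables (D : Type) (le : D -> D -> Prop) (left right : D -> D).
Hypothesis HD : IntervalPoset D le left right.

Lemma le_trans x y z : le x y -> le y z -> le x z.
Proof. destruct (ip_order _ _ _ _ HD) as [_ [_ Htrans]]. apply Htrans. Qed.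

Lemma le_left x : le x (left x).
Proof. apply (ip_i _ _ _ _ HD x). Qed.

Lemma le_right x : le x (right x).
Proof. apply (ip_i _ _ _ _ HD x). Qed.

Lemma eq_of_endpoints x y : left x = left y -> right x = right y -> x = y.
Proof.
  intros Hl Hr.
  destruct (ip_order _ _ _ _ HD) as [_ [Hanti _]].
  destruct (ip_i _ _ _ _ HD x) as [_ [_ Hglb_x]].
  destruct (ip_i _ _ _ _ HD y) as [_ [_ Hglb_y]].
  apply Hanti.
  - apply Hglb_y; [rewrite <- Hl; apply le_left | rewrite <- Hr; apply le_right].
  - apply Hglb_x; [rewrite Hl; apply le_left | rewrite Hr; apply le_right].
Qed.

Lemma max_le_endpoints y : max_le D left right (left y) (right y).
Proof. exists y. auto. Qed.

Lemma max_le_left_of_le x p :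
  is_maximal D le p -> le x p -> max_le D left right (left x) p.
Proof.
  intros Hp Hxp.
  destruct (ip_iii _ _ _ _ HD x p Hp Hxp) as [[z [_ [Hl Hr]]] _].
  exists z. auto.
Qed.

Lemma max_le_right_of_le x p :
  is_maximal D le p -> le x p -> max_le D left right p (right x).
Proof.
  intros Hp Hxp.
  destruct (ip_iii _ _ _ _ HD x p Hp Hxp) as [_ [z [_ [Hl Hr]]]].
  exists z. auto.
Qed.

Lemma extend_left a y :
  max_le D left right a (left y) ->
  exists w, le w y /\ left w = a /\ right w = right y.
Proof.
  intros [z [Ha Hzy]].
  destruct (ip_ii _ _ _ _ HD z y (eq_sym Hzy)) as [w [[_ [Hwy _]] [Hl Hr]]].
  exists w. split; [exact Hwy | split; congruence].
Qed.

Lemma extend_right y b :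
  max_le D left right (right y) b ->
  exists w, le w y /\ left w = left y /\ right w = b.
Proof.
  intros [z [Hyz Hb]].
  destruct (ip_ii _ _ _ _ HD y z Hyz) as [w [[Hwy _] [Hl Hr]]].
  exists w. split; [exact Hwy | split; congruence].
Qed.

End IntervalPosetOrder.

Theorem mainTheorem7 (D : Type) (le : D -> D -> Prop) (left right : D -> D)
  (HD : IntervalPoset D le left right) (x y : D) :
  le x y <->
  (max_le D left right (left x) (left y) /\
   max_le D left right (left y) (right y) /\
   max_le D left right (right y) (right x)).
Proof.
  split.
  - intros Hxy.
    split; [| split].
    + apply (max_le_left_of_le _ _ _ _ HD); [apply (ip_left_max _ _ _ _ HD) |].
      apply (le_trans _ _ _ _ HD _ y); [exact Hxy | apply (le_left _ _ _ _ HD)].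
    + apply max_le_endpoints.
    + apply (max_le_right_of_le _ _ _ _ HD); [apply (ip_right_max _ _ _ _ HD) |].
      apply (le_trans _ _ _ _ HD _ y); [exact Hxy | apply (le_right _ _ _ _ HD)].
  - intros [Hleft [_ Hright]].
    destruct (extend_left _ _ _ _ HD _ _ Hleft) as [w [Hwy [Hwl Hwr]]].
    rewrite <- Hwr in Hright.
    destruct (extend_right _ _ _ _ HD _ _ Hright) as [v [Hvw [Hvl Hvr]]].
    assert (Hvx : v = x) by (apply (eq_of_endpoints _ _ _ _ HD); congruence).
    subst v. apply (le_trans _ _ _ _ HD _ w); assumption.
Qed.
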